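(* Let $X$ be a non-empty finite set and $\boldsymbol{\nu}$ a random probability measure on $X$ such that $(\boldsymbol{\nu}(x))_{x\in X}$ is exchangeable. Then for every $A\subset X$, $$\mathrm{Var}(\boldsymbol{\nu}(A))\le\frac{|A|}{|X|}\,\mathbb{E}\Big[\max_{x\in X}\boldsymbol{\nu}(x)\Big].$$
   Context: Exchangeable means the law of the collection is invariant under permutations of $X$. *)

From HB Require Import structures.
From mathcomp Require Import all_boot all_order all_algebra perm.
From mathcomp Require Import all_classical all_reals all_analysis.
Set Implicit Arguments. Unset Strict Implicit. Unset Printing Implicit Defensive.
Import Order.TTheory GRing.Theory Num.Theory.
Local Open Scope classical_set_scope.
Local Open Scope ring_scope.

(* A random family (nu x)_{x in X} of real random variables on the probability
   space (Omega, P) is exchangeable when its joint law on R^X is invariant under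
   every permutation s of X: the law of (nu (s x))_x equals the law of (nu x)_x.
   Since X is finite, the joint law is determined by its values on measurable
   rectangles prod_x B x (a pi-system generating the product sigma-algebra),
   so we state equality of laws on all such rectangles. *)
Definition exchangeable {d} {Omega : measurableType d} {R : realType}
  (P : probability Omega R) {X : finType} (nu : Omega -> X -> R) : Prop :=
  forall (s : {perm X}) (B : X -> set R),
    (forall x, measurable (B x)) ->
    P [set w | forall x, B x (nu w (s x))] = P [set w | forall x, B x (nu w x)].

From HB Require Import structures.
From mathcomp Require Import all_boot all_order all_algebra perm.
From mathcomp Require Import all_classical all_reals all_analysis.
From mathcomp Require Import measurable_realfun lra.
Import Order.TTheory GRing.Theory Num.Theory.
Local Open Scope classical_set_scope.
Local Open Scope ring_scope.

(* By exchangeability every nu x has the same mean, which is 1 / N with N = #|X|,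
   and E[nu x * nu y] takes one value a on the diagonal and one value b off it;
   squaring sum_x nu x = 1 gives N (a + (N - 1) b) = 1.  For K = #|A| this yields
   Var nu(A) = K (a + (K - 1) b) - (K / N)^2, while sum_x (nu x)^2 <= max_x nu x
   gives N a <= E[max_x nu x].  The bound then reduces to K (K - 1) b <= (K / N)^2,
   which follows from N (N - 1) b <= 1 and K <= N. *)

Lemma perm_pair_transitive {X : finType} {x y x' y' : X} :
  x != y -> x' != y' -> exists s : {perm X}, s x = x' /\ s y = y'.
Proof.
move=> xy x'y'; set z := tperm x x' y.
have zx' : z != x'.
  by rewrite /z -{2}(tpermL x x') (inj_eq (@perm_inj _ _)) eq_sym.
exists (tperm x x' * tperm z y')%g.
by split; rewrite permM ?tpermL -/z ?tpermL // tpermD // eq_sym.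
Qed.

Lemma sum_two_valued (R : pzRingType) (X : finType) (B : {set X}) (a b : R) :
  \sum_(x in B) \sum_(y in B) (if x == y then a else b) =
  #|B|%:R * (a + (#|B|%:R - 1) * b).
Proof.
have row x : x \in B ->
    \sum_(y in B) (if x == y then a else b) = a + (#|B|%:R - 1) * b.
  move=> xB; rewrite (eq_bigr (fun y => b + (if x == y then a - b else 0))); last first.
    by move=> y _; case: eqP => _; rewrite ?addr0 // addrC subrK.
  rewrite big_split /= sumr_const (bigD1 x) //= eqxx big1 ?addr0; last first.
    by move=> y /andP[_ /negbTE]; rewrite eq_sym => ->.
  by rewrite mulrBl mul1r mulr_natl addrCA.
by rewrite (eq_bigr _ row) sumr_const mulr_natl.
Qed.

Lemma two_valued_variance_le (R : realFieldType) (N K a b : R) :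
  1 <= N -> 0 <= K <= N -> 0 <= a -> 0 <= b -> N * (a + (N - 1) * b) = 1 ->
  K * (a + (K - 1) * b) - (K / N) ^+ 2 <= K / N * (N * a).
Proof.
move=> N1 /andP[K0 KN] a0 b0 Nab.
have N_gt0 : 0 < N := lt_le_trans ltr01 N1.
(* With K = N k the claim reads N k (N k - 1) b <= k ^ 2: use N k - 1 <= k (N - 1)
   (as k <= 1) and N (N - 1) b <= 1. *)
set k := K / N; have -> : K = N * k by rewrite /k mulrC divfK ?gt_eqF.
have k_ge0 : 0 <= k by rewrite divr_ge0 // ltW.
have k_le1 : k <= 1 by rewrite ler_pdivrMr ?mul1r.
have offdiag_le1 : N * (N - 1) * b <= 1 by nra.
have Nbk_ge0 : 0 <= N * b * k by rewrite mulr_ge0 // mulr_ge0 // ltW.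
have k_le1_step : 0 <= N * b * k * (1 - k) by rewrite mulr_ge0 // subr_ge0.
have offdiag_step : 0 <= k ^+ 2 * (1 - N * (N - 1) * b).
  by apply: mulr_ge0; rewrite ?sqr_ge0 ?subr_ge0.
nra.
Qed.

Lemma measurable_fun_bigmaxr d (T : measurableType d) (R : realType)
    (I : Type) (r : seq I) (p : pred I) (x0 : R) (F : I -> T -> R) :
  (forall i, measurable_fun setT (F i)) ->
  measurable_fun setT (fun w => \big[Num.max/x0]_(i <- r | p i) F i w).
Proof.
move=> mF; elim: r => [|i r IHr].
  by under eq_fun do rewrite big_nil; exact: measurable_cst.
under eq_fun do rewrite big_cons.
by case: (p i) => //; exact: measurable_maxr.
Qed.

Section expectation_lemmas.
Local Open Scope ereal_scope.
Context {d} {T : measurableType d} {R : realType} (P : probability T R).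

Lemma Lfun1_bounded (f : T -> R) (k : R) : measurable_fun setT f ->
  (forall w, `|f w| <= k)%R -> f \in Lfun P 1.
Proof.
move=> mf fk; apply/Lfun1_integrable.
apply: (le_integrable measurableT _ _ (finite_measure_integrable_cst P k measurableT)).
  exact/measurable_EFinP.
move=> w _ /=; rewrite lee_fin (le_trans (fk w))// ler_norm//.
Qed.

Lemma expectation_bigsum (I : Type) (r : seq I) (p : pred I) (F : I -> T -> R) :
  (forall i, p i -> F i \in Lfun P 1) ->
  'E_P[\sum_(i <- r | p i) F i] = \sum_(i <- r | p i) 'E_P[F i].
Proof.
move=> hF; elim: r => [|i r IHr]; first by rewrite !big_nil expectation_cst.
rewrite !big_cons; case: ifP => // pi.
by rewrite expectationD ?IHr ?hF ?rpred_sum.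
Qed.

End expectation_lemmas.

Section exchangeable_pairs.
Context {d} {Omega : measurableType d} {R : realType} {P : probability Omega R}.
Context {X : finType} {nu : Omega -> X -> R}.
Hypothesis nu_meas : forall x : X, measurable_fun setT (fun w => nu w x).
Hypothesis nu_exch : exchangeable P nu.

Lemma exchangeable_pair_rectangle (s : {perm X}) (x y : X) (A B : set R) :
  measurable A -> measurable B ->
  P [set w | A (nu w (s x)) /\ B (nu w (s y))] = P [set w | A (nu w x) /\ B (nu w y)].
Proof.
move=> mA mB.
pose C z := (if z == x then A else setT) `&` (if z == y then B else setT).
have mC z : measurable (C z) by apply: measurableI; case: ifP.
have rectE (t : X -> X) :
    [set w | A (nu w (t x)) /\ B (nu w (t y))] = [set w | forall z, C z (nu w (t z))].
  apply/seteqP; split => w /=.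
    by move=> [Aw Bw] z; split; case: eqP => // ->.
  by move=> Cw; split; [case: (Cw x)|case: (Cw y)]; rewrite eqxx.
by rewrite (rectE s) (rectE id); exact: nu_exch.
Qed.

Let pair_mfun (x y : X) : {mfun Omega >-> (R * R)%type} :=
  HB.pack (fun w => (nu w x, nu w y))
    (isMeasurableFun.Build _ _ _ _ _ (measurable_fun_pair (nu_meas x) (nu_meas y))).

Lemma exchangeable_pair_distribution (s : {perm X}) (x y : X) (S : set (R * R)) :
  measurable S ->
  P ((fun w => (nu w (s x), nu w (s y))) @^-1` S) = P ((fun w => (nu w x, nu w y)) @^-1` S).
Proof.
move=> mS.
change (distribution P (pair_mfun (s x) (s y)) S = distribution P (pair_mfun x y) S).
apply: (measure_unique [set A `*` B | A in measurable & B in measurable] (fun=> setT)) => //.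
- exact: measurable_prod_measurableType.
- move=> _ _ [A1 mA1 [B1 mB1 <-]] [A2 mA2 [B2 mB2 <-]]; rewrite -setXI.
  by exists (A1 `&` A2); [exact: measurableI|exists (B1 `&` B2) => //; exact: measurableI].
- by move=> _; exists setT => //; exists setT => //; rewrite setXTT.
- by rewrite bigcup_const.
- by move=> _ [A mA [B mB <-]]; exact: exchangeable_pair_rectangle.
- by move=> _ /=; rewrite probability_setT ltry.
Qed.

Lemma exchangeable_pair_integral (s : {perm X}) (x y : X) (h : R * R -> \bar R) :
  measurable_fun setT h -> (forall p, 0 <= h p)%E ->
  (\int[P]_w h (nu w (s x), nu w (s y)) = \int[P]_w h (nu w x, nu w y))%E.
Proof.
move=> mh h0.
rewrite -[LHS](ge0_integral_distribution (pair_mfun (s x) (s y)) mh h0).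
rewrite -[RHS](ge0_integral_distribution (pair_mfun x y) mh h0).
by apply: eq_measure_integral => S mS _; exact: exchangeable_pair_distribution.
Qed.

End exchangeable_pairs.

Section random_probability_vector.
Context {d} {Omega : measurableType d} {R : realType} (P : probability Omega R).
Context {X : finType} {nu : Omega -> X -> R}.
Hypothesis nu_meas : forall x : X, measurable_fun setT (fun w => nu w x).
Hypothesis nu_ge0 : forall w x, 0 <= nu w x.
Hypothesis nu_sum1 : forall w, \sum_(x : X) nu w x = 1.
Hypothesis nu_exch : exchangeable P nu.
Hypothesis X_nonempty : (0 < #|X|)%N.

Let mean x := fine ('E_P[(fun w => nu w x)%R])%E.
Let moment2 x y := fine ('E_P[(fun w => nu w x * nu w y)%R])%E.
Let mass (B : {set X}) w := \sum_(x in B) nu w x.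
Let max_nu w := \big[Num.max/0]_(x : X) nu w x.

Lemma nu_le1 w x : nu w x <= 1.
Proof. by rewrite -(nu_sum1 w) (bigD1 x) //= lerDl sumr_ge0. Qed.

Lemma nu_Lfun1 x : (fun w => nu w x) \in Lfun P 1.
Proof. by apply: (Lfun1_bounded P _ 1) => // w; rewrite ger0_norm ?nu_le1. Qed.

Lemma nuM_Lfun1 x y : (fun w => nu w x * nu w y) \in Lfun P 1.
Proof.
apply: (Lfun1_bounded P _ 1); first exact: measurable_funM.
by move=> w; rewrite normrM !ger0_norm // mulr_ile1 ?nu_le1.
Qed.

Lemma expectation_nu x : ('E_P[(fun w => nu w x)%R] = (mean x)%:E)%E.
Proof. by rewrite fineK // expectation_fin_num // nu_Lfun1. Qed.

Lemma expectation_nuM x y : ('E_P[(fun w => nu w x * nu w y)%R] = (moment2 x y)%:E)%E.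
Proof. by rewrite fineK // expectation_fin_num // nuM_Lfun1. Qed.

Lemma mean_perm (s : {perm X}) x : mean (s x) = mean x.
Proof.
(* The pair lemma wants an integrand that is nonnegative on all of R * R. *)
have normE z :
    (\int[P]_w (nu w z)%:E = \int[P]_w (`|(nu w z, nu w z).1|)%:E)%E.
  by apply: eq_integral => w _; rewrite /= ger0_norm.
rewrite /mean !expectation.unlock normE [in RHS]normE.
congr fine; apply: (exchangeable_pair_integral nu_meas nu_exch s x x
  (fun p => (`|p.1|)%:E)) => //.
by apply/measurable_EFinP; apply: measurableT_comp => //; exact: measurable_fst.
Qed.

Lemma moment2_perm (s : {perm X}) x y : moment2 (s x) (s y) = moment2 x y.
Proof.
have normE z t : (\int[P]_w (nu w z * nu w t)%:E =
    \int[P]_w (`|(nu w z, nu w t).1 * (nu w z, nu w t).2|)%:E)%E.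
  by apply: eq_integral => w _; rewrite /= ger0_norm ?mulr_ge0.
rewrite /moment2 !expectation.unlock normE [in RHS]normE.
congr fine; apply: (exchangeable_pair_integral nu_meas nu_exch s x y
  (fun p => (`|p.1 * p.2|)%:E)) => //.
apply/measurable_EFinP/measurableT_comp => //.
by apply: measurable_funM; [exact: measurable_fst|exact: measurable_snd].
Qed.

Lemma mean_uniform x : mean x = #|X|%:R^-1.
Proof.
have meanE y : mean y = mean x by rewrite -(mean_perm (tperm x y) x) tpermL.
have sum_mean : \sum_(y : X) mean y = 1.
  apply: EFin_inj; rewrite -sumEFin.
  under eq_bigr do rewrite -expectation_nu.
  rewrite -expectation_bigsum => [|y _]; last exact: nu_Lfun1.
  by rewrite fct_sumE; under eq_fun do rewrite nu_sum1; exact: expectation_cst.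
have N_neq0 : #|X|%:R != 0 :> R by rewrite pnatr_eq0 -lt0n.
rewrite (eq_bigr _ (fun y _ => meanE y)) sumr_const -mulr_natl in sum_mean.
by rewrite -(mulKf N_neq0 (mean x)) sum_mean mulr1.
Qed.

Lemma moment2_two_valued : exists a b,
  [/\ 0 <= a, 0 <= b & forall x y, moment2 x y = if x == y then a else b].
Proof.
case/card_gt0P: X_nonempty => x0 _.
have moment2_ge0 x y : 0 <= moment2 x y.
  by rewrite fine_ge0 // expectation_ge0 // => w; rewrite mulr_ge0.
have diag x : moment2 x x = moment2 x0 x0.
  by rewrite -(moment2_perm (tperm x x0)) !tpermL.
have offdiag x y x' y' : x != y -> x' != y' -> moment2 x y = moment2 x' y'.
  by move=> xy x'y'; have [s [<- <-]] := perm_pair_transitive xy x'y'; rewrite moment2_perm.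
case: (pickP (fun p : X * X => p.1 != p.2)) => [[x' y'] /= x'y'|nodistinct].
  exists (moment2 x0 x0), (moment2 x' y'); split => // x y.
  by case: eqP => [->|/eqP xy]; [exact: diag|exact: offdiag].
exists (moment2 x0 x0), 0; split => // x y.
by case: eqP => [->|/eqP xy]; [exact: diag|have := nodistinct (x, y); rewrite /= xy].
Qed.

Lemma massE B : mass B = \sum_(x in B) (fun w => nu w x).
Proof. by rewrite fct_sumE. Qed.

Lemma mass_sqrE B :
  (mass B * mass B)%R = \sum_(x in B) \sum_(y in B) (fun w => nu w x * nu w y).
Proof.
apply/funext => w; rewrite fct_sumE.
have -> : (mass B * mass B)%R w = mass B w * mass B w by [].
rewrite /mass mulr_suml; apply: eq_bigr => x _.
by rewrite fct_sumE mulr_sumr.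
Qed.

Lemma mass_Lfun1 B : mass B \in Lfun P 1.
Proof. by rewrite massE rpred_sum // => x _; exact: nu_Lfun1. Qed.

Lemma mass_sqr_Lfun1 B : (mass B * mass B)%R \in Lfun P 1.
Proof.
rewrite mass_sqrE rpred_sum // => x _.
by rewrite rpred_sum // => y _; exact: nuM_Lfun1.
Qed.

Lemma expectation_mass B : ('E_P[mass B] = (#|B|%:R / #|X|%:R)%:E)%E.
Proof.
rewrite massE expectation_bigsum => [|x _]; last exact: nu_Lfun1.
under eq_bigr do rewrite expectation_nu mean_uniform.
by rewrite sumEFin sumr_const mulr_natl.
Qed.

Section two_valued.
Context {a b : R}.
Hypothesis moment2E : forall x y, moment2 x y = if x == y then a else b.

Lemma expectation_mass_sqr B :
  ('E_P[mass B * mass B] = (#|B|%:R * (a + (#|B|%:R - 1) * b))%:E)%E.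
Proof.
rewrite mass_sqrE expectation_bigsum => [|x _]; last first.
  by rewrite rpred_sum // => y _; exact: nuM_Lfun1.
rewrite -sum_two_valued -sumEFin; apply: eq_bigr => x _.
rewrite expectation_bigsum => [|y _]; last exact: nuM_Lfun1.
by rewrite -sumEFin; apply: eq_bigr => y _; rewrite expectation_nuM moment2E.
Qed.

Lemma variance_mass B : ('V_P[mass B] =
  (#|B|%:R * (a + (#|B|%:R - 1) * b) - (#|B|%:R / #|X|%:R) ^+ 2)%:E)%E.
Proof.
rewrite /variance covarianceE ?mass_Lfun1 ?mass_sqr_Lfun1 //.
by rewrite expectation_mass_sqr expectation_mass -EFinM -EFinB expr2.
Qed.

Lemma moment2_total : #|X|%:R * (a + (#|X|%:R - 1) * b) = 1.
Proof.
apply: EFin_inj; rewrite -cardsT -expectation_mass_sqr -(expectation_cst P 1).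
congr expectation; apply/funext => w.
have massT : mass [set: X] w = 1.
  by rewrite -(nu_sum1 w); apply: eq_bigl => x; rewrite inE.
by rewrite -[LHS]/(mass _ w * mass _ w) massT mulr1.
Qed.

Lemma expectation_max_nu_ge : ((#|X|%:R * a)%:E <= 'E_P[max_nu])%E.
Proof.
have sqr_le_max w : \sum_x nu w x * nu w x <= max_nu w.
  apply: le_trans (_ : \sum_x max_nu w * nu w x <= _).
    by apply: ler_sum => x _; rewrite ler_wpM2r // le_bigmax.
  by rewrite -mulr_sumr nu_sum1 mulr1.
have <- : ('E_P[\sum_x (fun w => nu w x * nu w x)] = (#|X|%:R * a)%:E)%E.
  rewrite expectation_bigsum => [|x _]; last exact: nuM_Lfun1.
  under eq_bigr do rewrite expectation_nuM moment2E eqxx.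
  by rewrite sumEFin sumr_const mulr_natl.
apply: expectation_le => //.
- by rewrite fct_sumE; apply: measurable_sum => x; exact: measurable_funM.
- exact: measurable_fun_bigmaxr.
- by move=> w; rewrite fct_sumE sumr_ge0 // => x _; rewrite mulr_ge0.
- by move=> w; exact: bigmax_ge_id.
- by apply: aeW => w; rewrite fct_sumE.
Qed.

End two_valued.

End random_probability_vector.

Theorem lemma6p3 (d : measure_display) (Omega : measurableType d) (R : realType)
  (P : probability Omega R) (X : finType) (nu : Omega -> X -> R)
  (X_nonempty : (0 < #|X|)%N)
  (nu_meas : forall x : X, measurable_fun setT (fun w => nu w x))
  (nu_ge0 : forall w x, 0 <= nu w x)
  (nu_sum1 : forall w, \sum_(x : X) nu w x = 1)
  (nu_exch : exchangeable P nu)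
  (A : {set X}) :
  ('V_P[(fun w => \sum_(x in A) nu w x)%R]
    <= ((#|A|%:R / #|X|%:R : R)%:E
        * 'E_P[(fun w => \big[Num.max/0]_(x : X) nu w x)%R]))%E.
Proof.
have [a [b [a_ge0 b_ge0 moment2E]]] :=
  moment2_two_valued P nu_meas nu_ge0 nu_exch X_nonempty.
have total := moment2_total P nu_meas nu_ge0 nu_sum1 moment2E.
have max_nu_ge := expectation_max_nu_ge P nu_meas nu_ge0 nu_sum1 moment2E.
rewrite (variance_mass P nu_meas nu_ge0 nu_sum1 nu_exch X_nonempty moment2E).
apply: le_trans (lee_wpmul2l _ max_nu_ge); last by rewrite lee_fin divr_ge0.
by rewrite lee_fin two_valued_variance_le // ?ler1n // ler0n ler_nat max_card.
Qed.
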